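(* Let $n+1>k>1$. Index matrices $A\in\mathrm{Mat}_{n+1,k}(\mathbb C)$ as $A=(a_{i,j})_{0\le i\le n,\,1\le j\le k}$. Let $\mathbf E\subset\mathrm{Mat}_{n+1,k}(\mathbb C)\times\mathbb C^{n+1}$ be the linear subspace of pairs $(A,x)$ with $a_{n,2}=\dots=a_{n,k}=0$. Then $\mathbf W_{k,n}\cap\mathbf E=\mathbf X_{k,n}\cup\mathbf Y_{k,n}$, and the intersection multiplicity of $\mathbf W_{k,n}$ and $\mathbf E$ along each of the components $\mathbf X_{k,n}$ and $\mathbf Y_{k,n}$ is $1$.
   Context: $\mathbf W_{k,n}=\{(A,x)\in\mathrm{Mat}_{n+1,k}(\mathbb C)\times\mathbb C^{n+1}:\operatorname{rk}A<k,\ x^TA=0\}$. $X_{k,n}=\{A\in\mathrm{Mat}_{n+1,k}(\mathbb C):\operatorname{rk}A<k\text{ and the last row of }A\text{ is zero}\}$, and for $k>1$, $Y_{k,n}$ is the set of $A\in\mathrm{Mat}_{n+1,k}(\mathbb C)$ whose last $k-1$ columns form a matrix in $X_{k-1,n}$ (i.e. an $(n+1)\times(k-1)$ matrix of rank $<k-1$ with zero last row). $\mathbf X_{k,n}=\{(A,x)\in\mathbf W_{k,n}:A\in X_{k,n}\}$ and $\mathbf Y_{k,n}=\{(A,x)\in\mathbf W_{k,n}:A\in Y_{k,n}\}$. *)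

From HB Require Import structures.
From mathcomp Require Import all_boot all_order all_algebra.
From mathcomp Require Import complex.
From mathcomp Require Import Rstruct.
From mathcomp Require Import mpoly.

Set Implicit Arguments.
Unset Strict Implicit.
Unset Printing Implicit Defensive.

Import Order.TTheory GRing.Theory Num.Theory.
Local Open Scope ring_scope.

Notation C := (complex Rdefinitions.R).

Definition dimAmb (n k : nat) : nat := (n.+1 * k + n.+1)%N.

(* Decoding a point of C^{dimAmb n k} into a pair (A, x). *)
Definition Amat (n k : nat) (v : 'I_(dimAmb n k) -> C) : 'M[C]_(n.+1, k) :=
  \matrix_(i < n.+1, j < k) v (lshift n.+1 (mxvec_index i j)).
Definition xvec (n k : nat) (v : 'I_(dimAmb n k) -> C) : 'cV[C]_(n.+1) :=
  \col_(i < n.+1) v (rshift (n.+1 * k) i).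

(* Column index j+1 of a matrix with k columns, for j < k-1
   (0-based indexing: the paper's columns 2..k are our columns 1..k-1). *)
Lemma succ_ord_proof (k : nat) (j : 'I_(k - 1)) : ((nat_of_ord j).+1 < k)%N.
Proof. by have := ltn_ord j; rewrite ltn_subRL add1n. Qed.
Definition succ_ord (k : nat) (j : 'I_(k - 1)) : 'I_k := Ordinal (succ_ord_proof j).

Definition lastcols (m k : nat) (A : 'M[C]_(m, k)) : 'M[C]_(m, k - 1) :=
  \matrix_(i < m, j < k - 1) A i (succ_ord j).

Definition inW (n k : nat) (A : 'M[C]_(n.+1, k)) (x : 'cV[C]_(n.+1)) : Prop :=
  (\rank A < k)%N /\ x^T *m A = 0.

Definition inXmat (n k : nat) (A : 'M[C]_(n.+1, k)) : Prop :=
  (\rank A < k)%N /\ row ord_max A = 0.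

(* Y_{k,n}: the last k-1 columns form a matrix in X_{k-1,n}. *)
Definition inYmat (n k : nat) (A : 'M[C]_(n.+1, k)) : Prop :=
  (\rank (lastcols A) < k - 1)%N /\ row ord_max (lastcols A) = 0.

Definition inXX (n k : nat) (A : 'M[C]_(n.+1, k)) (x : 'cV[C]_(n.+1)) : Prop := @inW n k A x /\ inXmat A.
Definition inYY (n k : nat) (A : 'M[C]_(n.+1, k)) (x : 'cV[C]_(n.+1)) : Prop := @inW n k A x /\ inYmat A.

(* E: a_{n,2} = ... = a_{n,k} = 0 (paper indexing), i.e. A ord_max j = 0
   for all columns j >= 1 in 0-based indexing. *)
Definition inEE (n k : nat) (A : 'M[C]_(n.+1, k)) (x : 'cV[C]_(n.+1)) : Prop :=
  forall j : 'I_k, (0 < j)%N -> A ord_max j = 0.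

Definition ptset (n k : nat)
    (P : 'M[C]_(n.+1, k) -> 'cV[C]_(n.+1) -> Prop) : ('I_(dimAmb n k) -> C) -> Prop :=
  fun v => P (Amat v) (xvec v).

Definition vanishing (N : nat) (S : ('I_N -> C) -> Prop) (p : {mpoly C[N]}) : Prop :=
  forall v, S v -> p.@[v] = 0.

(* S is (nonempty and) irreducible: I(S) is a prime ideal. *)
Definition irreducible_set (N : nat) (S : ('I_N -> C) -> Prop) : Prop :=
  ~ vanishing S 1 /\
  forall p q : {mpoly C[N]}, vanishing S (p * q) -> vanishing S p \/ vanishing S q.

(* Intersection multiplicity one of V and W along Z:
   Z is irreducible, contained in V ∩ W, and the local ring of the
   scheme-theoretic intersection V ∩ W (ideal I(V) + I(W)) at the generic
   point of Z has length 1, i.e. (I(V) + I(W)) P_P = P_P for P = I(Z):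
   every f ∈ I(Z) satisfies s f ∈ I(V) + I(W) for some s ∉ I(Z).
   (This condition forces Z to be an irreducible component of V ∩ W.) *)
Definition intersection_multiplicity_one (N : nat)
    (V W Z : ('I_N -> C) -> Prop) : Prop :=
  irreducible_set Z /\
  (forall v, Z v -> V v /\ W v) /\
  forall f : {mpoly C[N]}, vanishing Z f ->
    exists s q r : {mpoly C[N]},
      ~ vanishing Z s /\ vanishing V q /\ vanishing W r /\ s * f = q + r.

(* If (A, x) lies in W and in E, the last row of A is (a, 0, ..., 0).  When a = 0 the
   pair lies in X; when a <> 0, a kernel vector z of A has z_0 = 0, so the last k-1
   columns of A are dependent and the pair lies in Y.

   X and Y are irreducible because they are images of affine spaces under explicit
   polynomial maps.  These are built from the matrices [ann_mx y j] = y_j I - e_j y^T,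
   which span the matrices M with y^T M = 0 as soon as y <> 0, and from the fact that
   a vector y with y^T L = 0, for L with zero last row, is c P w + y_n e_n, where P is
   the projection killing the last coordinate and (P w)^T L = 0.

   Multiplicity one along Z follows from a retraction onto Z, rational with denominator
   a power of a polynomial d not vanishing identically on Z, which is the identity on E
   and maps W into Z.  For X, d is the minor of the first k-1 rows and last k-1 columns
   and the retraction replaces the last row of A by its expression in the first rows;
   for Y, d = a and the retraction clears the last row of A by column operations. *)

From HB Require Import structures.
From mathcomp Require Import all_boot all_order all_algebra.
From mathcomp Require Import complex Rstruct mpoly.
From Stdlib Require Import Classical_Prop.

Set Implicit Arguments.
Unset Strict Implicit.
Unset Printing Implicit Defensive.

Import GRing.Theory.
Local Open Scope ring_scope.

(** * Rings of functions *)

Record funring (R : comNzRingType) (D : Type) := FunRing {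
  funring_mem :> (D -> R) -> Prop;
  funring_ext : forall F G, funring_mem F -> F =1 G -> funring_mem G;
  funring_cst : forall c, funring_mem (fun=> c);
  funring_add : forall F G, funring_mem F -> funring_mem G ->
    funring_mem (fun v => F v + G v);
  funring_mul : forall F G, funring_mem F -> funring_mem G ->
    funring_mem (fun v => F v * G v)
}.
Arguments funring_cst {R D} f c.

Section FunringTheory.
Variables (R : comNzRingType) (D : Type) (S : funring R D).

Lemma funring_opp F : S F -> S (fun v => - F v).
Proof.
by move=> SF; apply: funring_ext (funring_mul (funring_cst S (-1)) SF) _ => v; rewrite mulN1r.
Qed.

Lemma funring_big (idx : R) (op : R -> R -> R) (I : Type) (r : seq I) (P : pred I) F :
    S (fun=> idx) -> (forall F G, S F -> S G -> S (fun v => op (F v) (G v))) ->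
  (forall i, P i -> S (F i)) -> S (fun v => \big[op/idx]_(i <- r | P i) F i v).
Proof.
move=> Sidx Sop SF; elim: r => [|i r IHr].
  by apply: funring_ext Sidx _ => v; rewrite big_nil.
case Pi: (P i).
  by apply: funring_ext (Sop _ _ (SF i Pi) IHr) _ => v; rewrite big_cons Pi.
by apply: funring_ext IHr _ => v; rewrite big_cons Pi.
Qed.

Lemma funring_sum (I : Type) (r : seq I) (P : pred I) F :
  (forall i, P i -> S (F i)) -> S (fun v => \sum_(i <- r | P i) F i v).
Proof. exact/funring_big/funring_add/funring_cst. Qed.

Lemma funring_prod (I : Type) (r : seq I) (P : pred I) F :
  (forall i, P i -> S (F i)) -> S (fun v => \prod_(i <- r | P i) F i v).
Proof. exact/funring_big/funring_mul/funring_cst. Qed.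

Lemma funring_exp F e : S F -> S (fun v => F v ^+ e).
Proof.
move=> SF; elim: e => [|e IHe].
  by apply: funring_ext (funring_cst S 1) _ => v; rewrite expr0.
by apply: funring_ext (funring_mul SF IHe) _ => v; rewrite exprS.
Qed.

Lemma funring_meval N (phi : D -> 'I_N -> R) (p : {mpoly R[N]}) :
  (forall i, S (fun v => phi v i)) -> S (fun v => p.@[phi v]).
Proof.
move=> Sphi; apply: funring_ext (fun v => esym (mevalE (phi v) p)).
apply: funring_sum => m _; apply: funring_mul; first exact: funring_cst.
by apply: funring_prod => i _; apply: funring_exp.
Qed.

Definition entrywise a b (M : D -> 'M[R]_(a, b)) := forall i j, S (fun v => M v i j).

Lemma entrywise_cst a b (M : 'M[R]_(a, b)) : entrywise (fun=> M).
Proof. by move=> i j; apply: funring_cst. Qed.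

Lemma entrywise_matrix a b (f : D -> 'I_a -> 'I_b -> R) :
  (forall i j, S (fun v => f v i j)) -> entrywise (fun v => \matrix_(i, j) f v i j).
Proof. by move=> Sf i j; apply: funring_ext (Sf i j) _ => v; rewrite mxE. Qed.

Lemma entrywise_add a b (M N : D -> 'M[R]_(a, b)) :
  entrywise M -> entrywise N -> entrywise (fun v => M v + N v).
Proof.
by move=> SM SN i j; apply: funring_ext (funring_add (SM i j) (SN i j)) _ => v; rewrite mxE.
Qed.

Lemma entrywise_opp a b (M : D -> 'M[R]_(a, b)) : entrywise M -> entrywise (fun v => - M v).
Proof. by move=> SM i j; apply: funring_ext (funring_opp (SM i j)) _ => v; rewrite mxE. Qed.

Lemma entrywise_scale a b (s : D -> R) (M : D -> 'M[R]_(a, b)) :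
  S s -> entrywise M -> entrywise (fun v => s v *: M v).
Proof. by move=> Ss SM i j; apply: funring_ext (funring_mul Ss (SM i j)) _ => v; rewrite mxE. Qed.

Lemma entrywise_tr a b (M : D -> 'M[R]_(a, b)) : entrywise M -> entrywise (fun v => (M v)^T).
Proof. by move=> SM i j; apply: funring_ext (SM j i) _ => v; rewrite mxE. Qed.

Lemma entrywise_mul a b c (M : D -> 'M[R]_(a, b)) (N : D -> 'M[R]_(b, c)) :
  entrywise M -> entrywise N -> entrywise (fun v => M v *m N v).
Proof.
move=> SM SN i j; apply: (funring_ext (F := fun v => \sum_l M v i l * N v l j)).
  by apply: funring_sum => l _; apply: funring_mul.
by move=> v; rewrite mxE.
Qed.

Lemma entrywise_sum a b (I : finType) (M : I -> D -> 'M[R]_(a, b)) :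
  (forall l, entrywise (M l)) -> entrywise (fun v => \sum_l M l v).
Proof.
move=> SM i j; apply: (funring_ext (F := fun v => \sum_l M l v i j)).
  by apply: funring_sum => l _; apply: SM.
by move=> v; rewrite summxE.
Qed.

Lemma entrywise_scalar_mx a (s : D -> R) : S s -> entrywise (fun v => (s v)%:M : 'M_a).
Proof.
move=> Ss i j; apply: (funring_ext (F := fun v => s v * (i == j)%:R)).
  by apply: funring_mul; [|apply: funring_cst].
by move=> v; rewrite mxE mulr_natr.
Qed.

Lemma entrywise_row_mx a b1 b2 (M1 : D -> 'M[R]_(a, b1)) (M2 : D -> 'M[R]_(a, b2)) :
  entrywise M1 -> entrywise M2 -> entrywise (fun v => row_mx (M1 v) (M2 v)).
Proof.
move=> SM1 SM2 i j; rewrite -(splitK j); case: (split j) => l /=.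
  by apply: funring_ext (SM1 i l) _ => v; rewrite row_mxEl.
by apply: funring_ext (SM2 i l) _ => v; rewrite row_mxEr.
Qed.

Lemma entrywise_col_mx a1 a2 b (M1 : D -> 'M[R]_(a1, b)) (M2 : D -> 'M[R]_(a2, b)) :
  entrywise M1 -> entrywise M2 -> entrywise (fun v => col_mx (M1 v) (M2 v)).
Proof.
move=> SM1 SM2 i j; rewrite -(splitK i); case: (split i) => l /=.
  by apply: funring_ext (SM1 l j) _ => v; rewrite col_mxEu.
by apply: funring_ext (SM2 l j) _ => v; rewrite col_mxEd.
Qed.

Lemma entrywise_lsubmx a b1 b2 (M : D -> 'M[R]_(a, b1 + b2)) :
  entrywise M -> entrywise (fun v => lsubmx (M v)).
Proof. by move=> SM i j; apply: funring_ext (SM i _) _ => v; rewrite mxE. Qed.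

Lemma entrywise_rsubmx a b1 b2 (M : D -> 'M[R]_(a, b1 + b2)) :
  entrywise M -> entrywise (fun v => rsubmx (M v)).
Proof. by move=> SM i j; apply: funring_ext (SM i _) _ => v; rewrite mxE. Qed.

Lemma entrywise_row a b i0 (M : D -> 'M[R]_(a, b)) :
  entrywise M -> entrywise (fun v => row i0 (M v)).
Proof. by move=> SM i j; apply: funring_ext (SM i0 j) _ => v; rewrite mxE. Qed.

Lemma entrywise_mxvec a b (M : D -> 'M[R]_(a, b)) :
  entrywise M -> entrywise (fun v => mxvec (M v)).
Proof.
move=> SM i j; rewrite ord1; case/mxvec_indexP: j => r c.
by apply: funring_ext (SM r c) _ => v; rewrite mxvecE.
Qed.

Lemma funring_det a (M : D -> 'M[R]_a) : entrywise M -> S (fun v => \det (M v)).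
Proof.
move=> SM; apply: funring_sum => s _; apply: funring_mul; first exact: funring_cst.
by apply: funring_prod => i _; apply: SM.
Qed.

Lemma entrywise_adj a (M : D -> 'M[R]_a) : entrywise M -> entrywise (fun v => \adj (M v)).
Proof.
move=> SM i j.
apply: (funring_ext (F := fun v => (-1) ^+ (j + i) * \det (row' j (col' i (M v))))).
  apply: funring_mul; first exact: funring_cst.
  by apply: funring_det => r c; apply: funring_ext (SM _ _) _ => v; rewrite !mxE.
by move=> v; rewrite mxE.
Qed.

End FunringTheory.

Section Polyfun.
Variables (R : comNzRingType) (T : finType).

Definition polyfun (F : (T -> R) -> R) :=
  exists p : {mpoly R[#|T|]}, forall t, F t = p.@[fun i => t (enum_val i)].

Lemma polyfun_ext F G : polyfun F -> F =1 G -> polyfun G.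
Proof. by case=> p Fp FG; exists p => t; rewrite -FG. Qed.

Lemma polyfun_cst c : polyfun (fun=> c).
Proof. by exists c%:MP => t; rewrite mevalC. Qed.

Lemma polyfun_add F G : polyfun F -> polyfun G -> polyfun (fun t => F t + G t).
Proof. by case=> p Fp [q Gq]; exists (p + q) => t; rewrite mevalD Fp Gq. Qed.

Lemma polyfun_mul F G : polyfun F -> polyfun G -> polyfun (fun t => F t * G t).
Proof. by case=> p Fp [q Gq]; exists (p * q) => t; rewrite mevalM Fp Gq. Qed.

Canonical polyfun_funring := FunRing polyfun_ext polyfun_cst polyfun_add polyfun_mul.

Lemma polyfun_coord tau : polyfun (fun t => t tau).
Proof. by exists 'X_(enum_rank tau) => t; rewrite mevalXU enum_rankK. Qed.

Lemma polyfun_coord_col p (f : 'I_p -> T) : entrywise polyfun_funring (fun t => \col_i t (f i)).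
Proof. by apply: entrywise_matrix => i j; apply: polyfun_coord. Qed.

Lemma polyfun_coord_mx p q (f : 'I_p -> 'I_q -> T) :
  entrywise polyfun_funring (fun t => \matrix_(i, j) t (f i j)).
Proof. by apply: entrywise_matrix => i j; apply: polyfun_coord. Qed.

End Polyfun.

Arguments polyfun_coord {R T} tau.
Arguments polyfun_coord_col {R T p} f.
Arguments polyfun_coord_mx {R T p q} f.

Section UnivariatePolyfun.
Variable R : comNzRingType.

Definition upolyfun (F : R -> R) := exists q : {poly R}, forall s, F s = q.[s].

Lemma upolyfun_ext F G : upolyfun F -> F =1 G -> upolyfun G.
Proof. by case=> q Fq FG; exists q => s; rewrite -FG. Qed.

Lemma upolyfun_cst c : upolyfun (fun=> c).
Proof. by exists c%:P => s; rewrite hornerC. Qed.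

Lemma upolyfun_add F G : upolyfun F -> upolyfun G -> upolyfun (fun s => F s + G s).
Proof. by case=> p Fp [q Gq]; exists (p + q) => s; rewrite hornerD Fp Gq. Qed.

Lemma upolyfun_mul F G : upolyfun F -> upolyfun G -> upolyfun (fun s => F s * G s).
Proof. by case=> p Fp [q Gq]; exists (p * q) => s; rewrite hornerM Fp Gq. Qed.

Canonical upolyfun_funring := FunRing upolyfun_ext upolyfun_cst upolyfun_add upolyfun_mul.

End UnivariatePolyfun.

(** * Irreducibility and multiplicity one *)

(* On the line through points a and b where F and G do not vanish, F and G restrict to
   nonzero univariate polynomials, whose product cannot vanish everywhere. *)
Lemma polyfun_mul_eq0 (K : closedFieldType) (T : finType) (F G : (T -> K) -> K) :
    polyfun F -> polyfun G -> (forall t, F t * G t = 0) ->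
  F =1 (fun=> 0) \/ G =1 (fun=> 0).
Proof.
have zeroP (H : (T -> K) -> K) : H =1 (fun=> 0) \/ exists t, H t != 0.
  case: (classic (exists t, H t != 0)) => [|nH]; [by right | left => t].
  by have [//|Ht] := eqVneq (H t) 0; case: nH; exists t.
move=> [p Fp] [q Gq] FG0.
case: (zeroP F) => [|[a Fa]]; first by left.
case: (zeroP G) => [|[b Gb]]; first by right.
pose line s : T -> K := fun tau => a tau + s * (b tau - a tau).
have line_poly (r : {mpoly K[#|T|]}) :
    upolyfun (fun s => r.@[fun i => line s (enum_val i)]).
  apply: funring_meval => i.
  by exists ((a (enum_val i))%:P + 'X * (b (enum_val i) - a (enum_val i))%:P) => s;
    rewrite hornerD hornerC hornerM hornerX hornerC.
have [qF qFE] := line_poly p; have [qG qGE] := line_poly q.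
have qFa : qF.[0] = F a.
  by rewrite -qFE Fp; apply: meval_eq => i; rewrite /line mul0r addr0.
have qGb : qG.[1] = G b.
  by rewrite -qGE Gq; apply: meval_eq => i; rewrite /line mul1r addrC subrK.
have qF0 : qF != 0 by apply: contraNneq Fa => qF0; rewrite -qFa qF0 horner0.
have qG0 : qG != 0 by apply: contraNneq Gb => qG0; rewrite -qGb qG0 horner0.
have [s] := closed_nonrootP (qF * qG) (mulf_neq0 qF0 qG0).
by rewrite /root hornerM -qFE -qGE -Fp -Gq FG0 eqxx.
Qed.

Lemma irreducible_image (T : finType) N (S : ('I_N -> C) -> Prop)
    (Phi : (T -> C) -> 'I_N -> C) :
    (forall i, polyfun (fun t => Phi t i)) -> (forall t, S (Phi t)) ->
    (forall v, S v -> exists t, Phi t =1 v) ->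
  irreducible_set S.
Proof.
move=> Phi_poly Phi_in Phi_onto; split.
  by move/(_ _ (Phi_in (fun=> 0))); rewrite meval1 => /eqP; rewrite oner_eq0.
move=> p q pq0.
have PhiP (r : {mpoly C[N]}) : polyfun (fun t => r.@[Phi t]) by apply: funring_meval.
have pq0' t : p.@[Phi t] * q.@[Phi t] = 0 by rewrite -mevalM; apply: pq0.
have [r0|r0] := polyfun_mul_eq0 (PhiP p) (PhiP q) pq0'.
  by left => v /Phi_onto [t Ht]; rewrite -(meval_eq p Ht) r0.
by right => v /Phi_onto [t Ht]; rewrite -(meval_eq q Ht) r0.
Qed.

Section Regular.
Variables (K : fieldType) (N : nat) (d : {mpoly K[N]}).

Definition regular (F : ('I_N -> K) -> K) :=
  exists e (p : {mpoly K[N]}), forall v, d.@[v] != 0 -> p.@[v] = d.@[v] ^+ e * F v.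

Lemma regular_ext F G : regular F -> F =1 G -> regular G.
Proof. by case=> e [p Fp] FG; exists e, p => v /Fp ->; rewrite FG. Qed.

Lemma regular_cst c : regular (fun=> c).
Proof. by exists 0%N, c%:MP => v _; rewrite mevalC expr0 mul1r. Qed.

Lemma regular_add F G : regular F -> regular G -> regular (fun v => F v + G v).
Proof.
case=> e1 [p1 Fp1] [e2 [p2 Gp2]].
exists (e1 + e2)%N, (d ^+ e2 * p1 + d ^+ e1 * p2) => v dv.
rewrite mevalD !mevalM !rmorphXn /= Fp1 // Gp2 // exprD mulrDr.
by rewrite !mulrA [d.@[v] ^+ e1 * _]mulrC.
Qed.

Lemma regular_mul F G : regular F -> regular G -> regular (fun v => F v * G v).
Proof.
case=> e1 [p1 Fp1] [e2 [p2 Gp2]].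
exists (e1 + e2)%N, (p1 * p2) => v dv.
by rewrite mevalM Fp1 // Gp2 // exprD mulrACA.
Qed.

Canonical regular_funring := FunRing regular_ext regular_cst regular_add regular_mul.

Lemma regular_coord i : regular (fun v => v i).
Proof. by exists 0%N, 'X_i => v _; rewrite mevalXU expr0 mul1r. Qed.

Lemma regular_inv : regular (fun v => d.@[v]^-1).
Proof. by exists 1%N, 1 => v dv; rewrite meval1 expr1 mulfV. Qed.

End Regular.

(* If [f] vanishes on [Z] then [f \o phi = p / d^e] vanishes on [V] and [p = d^e f] on [W],
   so [d^(e+1) f = d p + (d^(e+1) f - d p)] lies in [I(V) + I(W)]. *)
Lemma multiplicity_one_retraction N (V W Z : ('I_N -> C) -> Prop)
    (d : {mpoly C[N]}) (phi : ('I_N -> C) -> 'I_N -> C) :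
    irreducible_set Z -> (forall v, Z v -> V v /\ W v) ->
    (exists2 v, Z v & d.@[v] != 0) ->
    (forall i, regular d (fun v => phi v i)) ->
    (forall v, W v -> d.@[v] != 0 -> phi v =1 v) ->
    (forall v, V v -> d.@[v] != 0 -> Z (phi v)) ->
  intersection_multiplicity_one V W Z.
Proof.
move=> Zirr ZVW [v0 Zv0 dv0] phi_reg phi_id phi_in.
split=> //; split=> // f Zf.
have [e [p pE]] : regular d (fun v => f.@[phi v]) by apply: funring_meval.
exists (d ^+ e.+1), (d * p), (d ^+ e.+1 * f - d * p); split; [|split; [|split]].
- by move/(_ v0 Zv0)/eqP; rewrite rmorphXn /= expf_eq0 (negbTE dv0) andbF.
- move=> v Vv; rewrite mevalM; have [->|dv] := eqVneq d.@[v] 0; first by rewrite mul0r.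
  by rewrite pE // Zf ?mulr0 //; apply: phi_in.
- move=> v Wv; rewrite mevalB !mevalM rmorphXn /=.
  have [->|dv] := eqVneq d.@[v] 0; first by rewrite expr0n !mul0r subrr.
  by rewrite pE // (meval_eq f (phi_id v Wv dv)) exprS mulrA subrr.
- by rewrite addrC subrK.
Qed.

(** * Linear algebra *)

Section LinearAlgebra.
Variable F : fieldType.

Lemma mxrank_ltP p q (A : 'M[F]_(p, q)) :
  reflect (exists2 z : 'cV[F]_q, z != 0 & A *m z = 0) (\rank A < q)%N.
Proof.
apply: (iffP idP) => [rkA | [z z0 Az]].
  have : kermx A^T != 0 by rewrite kermx_eq0 /row_free mxrank_tr neq_ltn rkA.
  case/rowV0Pn=> u /sub_kermxP uA u0; exists u^T; first by rewrite trmx_eq0.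
  by rewrite -[A]trmxK -trmx_mul uA trmx0.
have zA : (z^T <= kermx A^T)%MS by apply/sub_kermxP; rewrite -trmx_mul Az trmx0.
have := mxrankS zA; rewrite mxrank_ker rank_rV trmx_eq0 z0 mxrank_tr.
by rewrite lt0n subn_eq0 -ltnNge.
Qed.

Lemma left_kernel_common p q r (A : 'M[F]_(p, q)) (B : 'M[F]_(p, r)) :
  (\rank A + \rank B < p)%N ->
  exists2 y : 'cV[F]_p, y != 0 & y^T *m A = 0 /\ y^T *m B = 0.
Proof.
move=> rkAB; have : (\rank (col_mx A^T B^T) < p)%N.
  by rewrite -addsmxE (leq_ltn_trans (mxrank_adds_leqif _ _)) ?mxrank_tr.
case/mxrank_ltP=> y y0; rewrite mul_col_mx => /eqP; rewrite col_mx_eq0.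
case/andP=> /eqP yA /eqP yB; exists y => //.
by split; apply: trmx_inj; rewrite trmx_mul trmxK ?yA ?yB trmx0.
Qed.

Definition ann_mx p (y : 'cV[F]_p) (j : 'I_p) : 'M[F]_p :=
  y j 0 *: 1%:M - delta_mx j 0 *m y^T.

Section Annihilators.
Variable p : nat.
Implicit Types y z : 'cV[F]_p.

Lemma mulmx_ann y j : y^T *m ann_mx y j = 0.
Proof.
rewrite mulmxBr -scalemxAr mulmx1 mulmxA -colE (mx11_scalar (col j y^T)).
by rewrite mul_scalar_mx !mxE subrr.
Qed.

Lemma mul_ann_mx q y j (B : 'M[F]_(p, q)) : y^T *m B = 0 -> ann_mx y j *m B = y j 0 *: B.
Proof. by move=> yB; rewrite mulmxBl -scalemxAl mul1mx -mulmxA yB mulmx0 subr0. Qed.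

Definition lann q y (U : 'I_p -> 'M[F]_(p, q)) := \sum_j ann_mx y j *m U j.

Lemma mulmx_lann q y U : y^T *m @lann q y U = 0.
Proof. by rewrite mulmx_sumr big1 // => j _; rewrite mulmxA mulmx_ann mul0mx. Qed.

Lemma eq_lann q y (U V : 'I_p -> 'M[F]_(p, q)) : U =1 V -> lann y U = lann y V.
Proof. by move=> UV; apply: eq_bigr => j _; rewrite UV. Qed.

Lemma lann_pick q y j0 (B : 'M[F]_(p, q)) : y j0 0 != 0 -> y^T *m B = 0 ->
  B = lann y (fun j => if j == j0 then (y j0 0)^-1 *: B else 0).
Proof.
move=> yj0 yB; rewrite /lann (bigD1 j0) //= eqxx big1 ?addr0 => [|j /negbTE ->].
  by rewrite -scalemxAr mul_ann_mx // scalerA mulVf // scale1r.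
by rewrite mulmx0.
Qed.

Lemma lann_onto q y (B : 'M[F]_(p, q)) :
  y != 0 -> y^T *m B = 0 -> exists U, B = lann y U.
Proof. by case/cV0Pn=> j0 yj0 yB; eexists; exact: (lann_pick yj0 yB). Qed.

End Annihilators.

Definition biann p q (y : 'cV[F]_p) (z : 'cV[F]_q) (U : 'I_p -> 'I_q -> 'M[F]_(p, q)) :=
  lann y (fun j => (lann z (fun l => (U j l)^T))^T).

Section TwoSidedAnnihilators.
Variables p q : nat.
Implicit Types (y : 'cV[F]_p) (z : 'cV[F]_q).

Lemma eq_biann y z U V : (forall j l, U j l = V j l) -> biann y z U = biann y z V.
Proof.
move=> UV; apply: eq_bigr => j _; congr (_ *m _^T).
by apply: eq_bigr => l _; rewrite UV.
Qed.

Lemma mulmx_biann y z U : y^T *m biann y z U = 0.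
Proof. exact: mulmx_lann. Qed.

Lemma biann_mulmx y z U : biann y z U *m z = 0.
Proof.
apply: trmx_inj; rewrite trmx_mul trmx0 /biann /lann linear_sum /= mulmx_sumr.
by rewrite big1 // => j _; rewrite trmx_mul mulmxA trmxK mulmx_lann mul0mx.
Qed.

Lemma mxrank_biann y z U : (0 < q)%N -> (\rank (biann y z U) < q)%N.
Proof.
move=> q0; have [->|z0] := eqVneq z 0.
  have ann0 l : ann_mx (0 : 'cV_q) l = 0 by rewrite /ann_mx mxE scale0r trmx0 mulmx0 subr0.
  rewrite /biann /lann big1 ?mxrank0 // => j _.
  by rewrite big1 ?trmx0 ?mulmx0 // => l _; rewrite ann0 mul0mx.
by apply/mxrank_ltP; exists z; last exact: biann_mulmx.
Qed.

Lemma biann_onto y z (B : 'M[F]_(p, q)) :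
  y != 0 -> z != 0 -> y^T *m B = 0 -> B *m z = 0 -> exists U, B = biann y z U.
Proof.
case/cV0Pn=> j0 yj0 /cV0Pn[l0 zl0] yB Bz.
pose V j := if j == j0 then (y j0 0)^-1 *: B else 0.
have zV j : z^T *m (V j)^T = 0.
  by rewrite -trmx_mul /V; case: ifP; rewrite ?mul0mx ?trmx0 // -scalemxAl Bz scaler0 trmx0.
exists (fun j l => (if l == l0 then (z l0 0)^-1 *: (V j)^T else 0)^T).
rewrite [LHS](lann_pick yj0 yB) /biann; apply: eq_bigr => j _; congr (_ *m _).
rewrite -/(V j) -[LHS]trmxK {1}(lann_pick zl0 (zV j)); congr _^T.
by apply: eq_bigr => l _; rewrite trmxK.
Qed.

End TwoSidedAnnihilators.

Section LastCoordinate.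
Variable n : nat.
Local Notation P := (pid_mx n : 'M[F]_(n.+1)).
Local Notation e := (delta_mx ord_max 0 : 'cV[F]_(n.+1)).

Lemma pid_last_split q (A : 'M[F]_(n.+1, q)) : A = P *m A + e *m row ord_max A.
Proof.
have -> : P = 1%:M - delta_mx ord_max ord_max.
  apply/matrixP=> i j; rewrite !mxE val_eqE.
  have [<-|/negbTE ij] := eqVneq i j; last first.
    rewrite (_ : (i == ord_max) && (j == ord_max) = false) ?subr0 //.
    by apply: contraFF ij => /andP[/eqP-> /eqP->].
  have [->|iM] := eqVneq i ord_max; first by rewrite ltnn subrr.
  by rewrite ltn_neqAle -ltnS ltn_ord andbT (_ : (i != n :> nat)) ?subr0.
by rewrite mulmxBl mul1mx rowE mulmxA mul_delta_mx subrK.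
Qed.

Lemma row_last_pid q (A : 'M[F]_(n.+1, q)) : row ord_max (P *m A) = 0.
Proof.
rewrite row_mul (_ : row _ _ = 0) ?mul0mx //.
by apply/rowP=> j; rewrite !mxE ltnn andbF.
Qed.

Lemma pid_last_id q (A : 'M[F]_(n.+1, q)) : row ord_max A = 0 -> P *m A = A.
Proof. by move=> A0; rewrite [RHS]pid_last_split A0 mulmx0 addr0. Qed.

Lemma pid_last_split_col (x : 'cV[F]_(n.+1)) : x = P *m x + x ord_max 0 *: e.
Proof. by rewrite [LHS]pid_last_split (mx11_scalar (row _ _)) mul_mx_scalar mxE. Qed.

Lemma pid_last_col_id (x : 'cV[F]_(n.+1)) : x ord_max 0 = 0 -> P *m x = x.
Proof. by move=> x0; rewrite [RHS]pid_last_split_col x0 scale0r addr0. Qed.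

Lemma tr_delta_last_pid : e^T *m P = 0.
Proof. by rewrite trmx_delta -rowE -[P]mulmx1 row_last_pid. Qed.

Lemma pid_last_idem : P *m P = P.
Proof. exact: pid_mx_id. Qed.

Lemma tr_pid_mulmx_pid (y : 'cV[F]_(n.+1)) : (P *m y)^T *m P = (P *m y)^T.
Proof. by rewrite trmx_mul tr_pid_mx -mulmxA pid_last_idem. Qed.

Lemma left_kernel_last_decomp q (L : 'M[F]_(n.+1, q)) (y : 'cV[F]_(n.+1)) :
    row ord_max L = 0 -> (\rank L < n)%N -> y^T *m L = 0 ->
  exists w c, [/\ P *m w != 0, (P *m w)^T *m L = 0 & y = c *: (P *m w) + y ord_max 0 *: e].
Proof.
move=> L0 rkL yL; have PL : P *m L = L by apply: pid_last_id.
have [Py0|Py] := eqVneq (P *m y) 0; last first.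
  exists y, 1; split=> //; last by rewrite scale1r -pid_last_split_col.
  by rewrite trmx_mul tr_pid_mx -mulmxA PL.
have [|w0 w00 [w0L w0e]] := @left_kernel_common _ _ _ L e.
  by rewrite mxrank_delta addn1.
have Pw0 : P *m w0 = w0.
  apply: pid_last_col_id; have := congr1 (fun M : 'M[F]_1 => M 0 0) w0e.
  by rewrite -colE !mxE.
exists w0, 0; rewrite Pw0 scale0r add0r; split=> //.
by rewrite [LHS]pid_last_split_col Py0 add0r.
Qed.

End LastCoordinate.

End LinearAlgebra.

Section AnnihilatorEntrywise.
Variables (D : Type) (S : funring C D).

Lemma entrywise_ann_mx p (y : D -> 'cV[C]_p) j :
  entrywise S y -> entrywise S (fun t => ann_mx (y t) j).
Proof.
move=> Sy; apply: entrywise_add; first exact: entrywise_scale (Sy j 0) (entrywise_cst _ _).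
by apply/entrywise_opp/entrywise_mul; [apply: entrywise_cst | apply: entrywise_tr].
Qed.

Lemma entrywise_lann p q (y : D -> 'cV[C]_p) (U : D -> 'I_p -> 'M[C]_(p, q)) :
  entrywise S y -> (forall j, entrywise S (U^~ j)) -> entrywise S (fun t => lann (y t) (U t)).
Proof.
by move=> Sy SU; apply: entrywise_sum => j; apply: entrywise_mul; [apply: entrywise_ann_mx|].
Qed.

Lemma entrywise_biann p q (y : D -> 'cV[C]_p) (z : D -> 'cV[C]_q) U :
    entrywise S y -> entrywise S z -> (forall j l, entrywise S (fun t => U t j l)) ->
  entrywise S (fun t => biann (y t) (z t) (U t)).
Proof.
move=> Sy Sz SU; apply: entrywise_lann => // j.
by apply/entrywise_tr/entrywise_lann => // l; apply: entrywise_tr.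
Qed.

End AnnihilatorEntrywise.

(** * Pairs (A, x) as points of affine space *)

Section Encoding.
Variables n k : nat.
Local Notation N := (dimAmb n k).
Implicit Types (A : 'M[C]_(n.+1, k)) (x : 'cV[C]_(n.+1)).

Definition encode A x : 'I_N -> C := row_mx (mxvec A) x^T 0.

Lemma Amat_encode A x : Amat (encode A x) = A.
Proof. by apply/matrixP=> i j; rewrite mxE /encode row_mxEl mxvecE. Qed.

Lemma xvec_encode A x : xvec (encode A x) = x.
Proof. by apply/matrixP=> i j; rewrite ord1 !mxE /encode row_mxEr mxE. Qed.

Lemma encode_decode v : encode (Amat v) (xvec v) =1 v.
Proof.
move=> i; rewrite /encode -[i : 'I_(_ + _)]splitK; case: (split i) => [a|b] /=.
  by rewrite row_mxEl; case/mxvec_indexP: a => r c; rewrite mxvecE mxE.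
by rewrite row_mxEr !mxE.
Qed.

Lemma ptset_encode (P : 'M[C]_(n.+1, k) -> 'cV[C]_(n.+1) -> Prop) A x :
  ptset P (encode A x) = P A x.
Proof. by rewrite /ptset Amat_encode xvec_encode. Qed.

Lemma funring_encode (D : Type) (S : funring C D)
    (A : D -> 'M[C]_(n.+1, k)) (x : D -> 'cV[C]_(n.+1)) :
  entrywise S A -> entrywise S x -> forall i, S (fun t => encode (A t) (x t) i).
Proof.
by move=> SA Sx i; apply: (entrywise_row_mx (entrywise_mxvec SA) (entrywise_tr Sx)).
Qed.

Definition generic_mx : 'M[{mpoly C[N]}]_(n.+1, k) :=
  \matrix_(i, j) 'X_(lshift n.+1 (mxvec_index i j)).

Lemma map_generic_mx v : map_mx (meval v) generic_mx = Amat v.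
Proof. by apply/matrixP=> i j; rewrite !mxE mevalXU. Qed.

Lemma entrywise_Amat d : entrywise (regular_funring d) (@Amat n k).
Proof. by move=> i j; apply: regular_ext (regular_coord d _) _ => v; rewrite mxE. Qed.

Lemma entrywise_xvec d : entrywise (regular_funring d) (@xvec n k).
Proof. by move=> i j; apply: regular_ext (regular_coord d _) _ => v; rewrite !mxE. Qed.

Lemma irreducible_ptset (T : finType) (P : 'M[C]_(n.+1, k) -> 'cV[C]_(n.+1) -> Prop)
    (A : (T -> C) -> 'M[C]_(n.+1, k)) (x : (T -> C) -> 'cV[C]_(n.+1)) :
    entrywise (polyfun_funring C T) A -> entrywise (polyfun_funring C T) x ->
    (forall t, P (A t) (x t)) -> (forall B y, P B y -> exists t, A t = B /\ x t = y) ->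
  irreducible_set (ptset P).
Proof.
move=> PA Px A_in A_onto; apply: (@irreducible_image _ _ _ (fun t => encode (A t) (x t))).
- exact: funring_encode.
- by move=> t; rewrite ptset_encode.
- by move=> v /A_onto [t [At xt]]; exists t; rewrite At xt; apply: encode_decode.
Qed.

Lemma multiplicity_one_ptset (V W Z : 'M[C]_(n.+1, k) -> 'cV[C]_(n.+1) -> Prop)
    (d : {mpoly C[N]}) (delta : 'M[C]_(n.+1, k) -> C)
    (phiA : 'M[C]_(n.+1, k) -> 'cV[C]_(n.+1) -> 'M[C]_(n.+1, k))
    (phix : 'M[C]_(n.+1, k) -> 'cV[C]_(n.+1) -> 'cV[C]_(n.+1)) :
    irreducible_set (ptset Z) -> (forall A x, Z A x -> V A x /\ W A x) ->
    (forall v, d.@[v] = delta (Amat v)) ->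
    (exists A x, Z A x /\ delta A != 0) ->
    entrywise (regular_funring d) (fun v => phiA (Amat v) (xvec v)) ->
    entrywise (regular_funring d) (fun v => phix (Amat v) (xvec v)) ->
    (forall A x, W A x -> delta A != 0 -> phiA A x = A /\ phix A x = x) ->
    (forall A x, V A x -> delta A != 0 -> Z (phiA A x) (phix A x)) ->
  intersection_multiplicity_one (ptset V) (ptset W) (ptset Z).
Proof.
move=> Zirr ZVW dE [A0 [x0 [ZA0 dA0]]] phiA_reg phix_reg phi_id phi_in.
pose phi v := encode (phiA (Amat v) (xvec v)) (phix (Amat v) (xvec v)).
apply: (@multiplicity_one_retraction _ _ _ _ d phi) => //.
- by move=> v; apply: ZVW.
- by exists (encode A0 x0); rewrite ?ptset_encode // dE Amat_encode.
- exact: funring_encode.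
- by move=> v Wv; rewrite dE /phi => /(phi_id _ _ Wv) [-> ->]; apply: encode_decode.
- by move=> v Vv; rewrite dE /phi ptset_encode; apply: phi_in.
Qed.

End Encoding.

(** * The decomposition of the intersection of W and E *)

Section BlockLastRow.
Variables (F : fieldType) (n m : nat).
Implicit Types (A : 'M[F]_(n.+1, 1 + m.+1)).

Lemma row_last_block A :
  row ord_max A = row_mx (A ord_max 0)%:M (row ord_max (rsubmx A)).
Proof.
apply/rowP=> j; rewrite -[j]splitK; case: (split j) => [j0|j'] /=.
  by rewrite ord1 row_mxEl !mxE eqxx mulr1n; congr (A _ _); apply: val_inj.
by rewrite row_mxEr !mxE.
Qed.

Lemma mxrank_rsubmx_lt A :
    (\rank A < 1 + m.+1)%N -> A ord_max 0 != 0 -> row ord_max (rsubmx A) = 0 ->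
  (\rank (rsubmx A) < m.+1)%N.
Proof.
case/mxrank_ltP=> z z0 Az a0 A0.
have Azblock : lsubmx A *m usubmx z + rsubmx A *m dsubmx z = 0.
  by rewrite -mul_row_col hsubmxK vsubmxK.
have zu0 : usubmx z = 0.
  have /(congr1 (row ord_max)) := Az.
  rewrite row0 row_mul row_last_block -{1}[z]vsubmxK mul_row_col A0 mul0mx addr0.
  by rewrite mul_scalar_mx => /eqP; rewrite scaler_eq0 (negbTE a0) /= => /eqP.
apply/mxrank_ltP; exists (dsubmx z); last by rewrite -[RHS]Azblock zu0 mulmx0 add0r.
by apply: contra z0 => /eqP zd0; rewrite -[z]vsubmxK zu0 zd0 col_mx0.
Qed.

End BlockLastRow.

Section Decomposition.
Variables n m : nat.
Implicit Types (A : 'M[C]_(n.+1, 1 + m.+1)) (x : 'cV[C]_(n.+1)).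

Lemma lastcolsE A : lastcols A = rsubmx A.
Proof. by apply/matrixP=> i j; rewrite !mxE; congr (A i _); apply: val_inj. Qed.

Lemma inEE_rsubmx A x : inEE A x <-> row ord_max (rsubmx A) = 0.
Proof.
split=> [AE|A0 j]; first by apply/rowP=> j; rewrite !mxE; apply: AE.
rewrite -[j]splitK; case: (split j) => [j0|j'] /=; first by rewrite ord1.
by move=> _; have /rowP/(_ j') := A0; rewrite !mxE.
Qed.

Lemma inW_inEE_split A x : inW A x /\ inEE A x <-> inXX A x \/ inYY A x.
Proof.
rewrite inEE_rsubmx /inXX /inYY /inXmat /inYmat lastcolsE; split.
  move=> [[rkA xA] A0]; have [a0|a0] := eqVneq (A ord_max 0) 0.
    by left; split=> //; split=> //; rewrite row_last_block a0 A0 raddf0 row_mx0.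
  by right; split=> //; split=> //; apply: mxrank_rsubmx_lt.
case=> [[WAx [_ A0]]|[WAx [_ A0]]]; split=> //.
by move/eqP: A0; rewrite row_last_block row_mx_eq0 => /andP[_ /eqP].
Qed.

End Decomposition.

(** * The component X *)

Lemma matrix_eta (R : Type) p q (M : 'M[R]_(p, q)) : \matrix_(i, j) M i j = M.
Proof. by apply/matrixP=> i j; rewrite mxE. Qed.

Lemma col_eta (R : Type) p (v : 'cV[R]_p) : \col_i v i 0 = v.
Proof. by apply/matrixP=> i j; rewrite ord1 mxE. Qed.

Section XComponent.
Variables n m : nat.
Hypothesis hmn : (m.+2 < n.+1)%N.
Local Notation K := (1 + m.+1)%N.
Local Notation P := (pid_mx n : 'M[C]_(n.+1)).
Local Notation e := (delta_mx ord_max 0 : 'cV[C]_(n.+1)).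

Lemma inXX_param (w : 'cV[C]_(n.+1)) (z : 'cV[C]_K) U c xn :
  inXX (P *m biann (P *m w) z U) (c *: (P *m w) + xn *: e).
Proof.
have rkA : (\rank (P *m biann (P *m w) z U) < K)%N.
  exact: leq_ltn_trans (mxrankM_maxr _ _) (mxrank_biann _ _ _ _).
split; split=> //; last exact: row_last_pid.
rewrite linearD !linearZ /= mulmxDl -!scalemxAl !mulmxA tr_pid_mulmx_pid.
by rewrite tr_delta_last_pid mul0mx mulmx_biann !scaler0 addr0.
Qed.

Lemma inXX_onto (A : 'M[C]_(n.+1, K)) (x : 'cV[C]_(n.+1)) :
  inXX A x -> exists w z U c xn,
  A = P *m biann (P *m w) z U /\ x = c *: (P *m w) + xn *: e.
Proof.
move=> [[rkA xA] [_ A0]].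
have [w [c [Pw0 PwA ->]]] := left_kernel_last_decomp A0 (leq_trans rkA hmn) xA.
have [z z0 Az] := mxrank_ltP _ rkA.
have [U AU] := biann_onto Pw0 z0 PwA Az.
by exists w, z, U, c, (x ord_max 0); rewrite -AU (pid_last_id A0).
Qed.

(* Coordinates of the parameters w, z, U, c and x_n of [inXX_param]. *)
Local Notation TX := ('I_n.+1 + 'I_K + ('I_n.+1 * 'I_K * 'I_n.+1 * 'I_K) + unit + unit)%type.

Definition paramX_mx (t : TX -> C) : 'M[C]_(n.+1, K) :=
  P *m biann (P *m \col_i t (inl (inl (inl (inl i)))))
    (\col_l t (inl (inl (inl (inr l)))))
    (fun j l => \matrix_(r, s) t (inl (inl (inr (j, l, r, s))))).

Definition paramX_vec (t : TX -> C) : 'cV[C]_(n.+1) :=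
  t (inl (inr tt)) *: (P *m \col_i t (inl (inl (inl (inl i))))) + t (inr tt) *: e.

Lemma irreducible_X : irreducible_set (ptset (@inXX n K)).
Proof.
have poly_Pw : entrywise (polyfun_funring C TX) (fun t => P *m \col_i t (inl (inl (inl (inl i))))).
  exact: entrywise_mul (entrywise_cst _ _) (polyfun_coord_col _).
apply: (@irreducible_ptset _ _ _ _ paramX_mx paramX_vec).
- apply: entrywise_mul (entrywise_cst _ _) (entrywise_biann poly_Pw (polyfun_coord_col _) _).
  by move=> j l; apply: polyfun_coord_mx.
- apply: entrywise_add; apply: entrywise_scale (polyfun_coord _) _ => //.
  exact: entrywise_cst.
- by move=> t; apply: inXX_param.
move=> A x /inXX_onto [w [z [U [c [xn [-> ->]]]]]].
exists (fun tau => match tau with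
  | inl (inl (inl (inl i))) => w i 0
  | inl (inl (inl (inr l))) => z l 0
  | inl (inl (inr (j, l, r, s))) => U j l r s
  | inl (inr _) => c
  | inr _ => xn end).
rewrite /paramX_mx /paramX_vec /= [\col_i w i 0]col_eta [\col_i z i 0]col_eta.
by rewrite (eq_biann _ _ (fun j l => matrix_eta (U j l))).
Qed.

End XComponent.

Definition top_minor (R : pzRingType) n m (A : 'M[R]_(n.+1, 1 + m.+1)) : 'M[R]_(m.+1) :=
  pid_mx m.+1 *m rsubmx A.

Section XRetraction.
Variables (F : fieldType) (n m : nat).
Local Notation K := (1 + m.+1)%N.
Local Notation P := (pid_mx n : 'M[F]_(n.+1)).
Local Notation S := (pid_mx m.+1 : 'M[F]_(m.+1, n.+1)).
Local Notation e := (delta_mx ord_max 0 : 'cV[F]_(n.+1)).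
Implicit Types (A : 'M[F]_(n.+1, K)) (x : 'cV[F]_(n.+1)).

Definition lastrow_coef A : 'rV[F]_(m.+1) :=
  (\det (top_minor A))^-1 *: (row ord_max (rsubmx A) *m \adj (top_minor A)).

Lemma lastrow_coef_minor A :
  \det (top_minor A) != 0 -> lastrow_coef A *m top_minor A = row ord_max (rsubmx A).
Proof.
move=> d0; rewrite /lastrow_coef -scalemxAl -mulmxA mul_adj_mx mul_mx_scalar scalerA.
by rewrite mulVf // scale1r.
Qed.

(* The first m+1 rows span the row space of A, since they contain an invertible minor. *)
Lemma row_last_coef A : (\rank A < K)%N -> \det (top_minor A) != 0 ->
  row ord_max A = lastrow_coef A *m S *m A.
Proof.
move=> /mxrank_ltP[z z0 Az] d0.
have Az' : lsubmx A *m usubmx z + rsubmx A *m dsubmx z = 0.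
  by rewrite -mul_row_col hsubmxK vsubmxK.
have zu0 : usubmx z != 0.
  apply: contra z0 => /eqP zu0; move: Az'; rewrite zu0 mulmx0 add0r => Az''.
  have zd0 : dsubmx z = 0.
    rewrite -[dsubmx z](mulKmx (_ : top_minor A \in unitmx)) ?unitmxE ?unitfE //.
    by rewrite /top_minor -mulmxA Az'' !mulmx0.
  by rewrite -[z]vsubmxK zu0 zd0 col_mx0.
apply/eqP; rewrite -subr_eq0; apply/eqP.
have rz : (row ord_max A - lastrow_coef A *m S *m A) *m z = 0.
  by rewrite mulmxBl -row_mul -!mulmxA Az row0 !mulmx0 subrr.
have rr : rsubmx (row ord_max A - lastrow_coef A *m S *m A) = 0.
  rewrite linearB /= -mulmx_rsub; apply/eqP; rewrite subr_eq0; apply/eqP.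
  by rewrite -mulmxA -/(top_minor A) lastrow_coef_minor //; apply/rowP=> j; rewrite !mxE.
rewrite -[LHS]hsubmxK rr; move: rz; rewrite -[X in X *m z]hsubmxK rr.
rewrite -[z]vsubmxK mul_row_col mul0mx addr0 [usubmx z]mx11_scalar mul_mx_scalar.
move/eqP; rewrite scaler_eq0 => /orP[/eqP zu00|/eqP ->]; last by rewrite row_mx0.
by move: zu0; rewrite [usubmx z]mx11_scalar zu00 raddf0 eqxx.
Qed.

Definition retractX_corner A : F := A ord_max 0 - (lastrow_coef A *m S *m lsubmx A) 0 0.

Definition retractX_mx A : 'M[F]_(n.+1, K) := P *m A + e *m row_mx (retractX_corner A)%:M 0.

Definition retractX_vec A x : 'cV[F]_(n.+1) := x + x ord_max 0 *: (lastrow_coef A *m S)^T.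

Lemma retractX_id A x :
  row ord_max (rsubmx A) = 0 -> retractX_mx A = A /\ retractX_vec A x = x.
Proof.
move=> A0; have mu0 : lastrow_coef A = 0 by rewrite /lastrow_coef A0 mul0mx scaler0.
rewrite /retractX_vec /retractX_mx /retractX_corner mu0 !mul0mx trmx0 scaler0 addr0 mxE subr0.
by rewrite -A0 -row_last_block -pid_last_split.
Qed.

Lemma retractX_corner_eq0 A : (\rank A < K)%N -> \det (top_minor A) != 0 -> retractX_corner A = 0.
Proof.
move=> rkA d0; apply/eqP; rewrite subr_eq0; apply/eqP.
have /(congr1 (fun M => lsubmx M 0 0)) := row_last_coef rkA d0.
by rewrite -mulmx_lsub => <-; rewrite !mxE; congr (A _ _); apply: val_inj.
Qed.

Hypothesis hmn : (m.+2 < n.+1)%N.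

Lemma retractX_in A x : (\rank A < K)%N -> x^T *m A = 0 -> \det (top_minor A) != 0 ->
  [/\ (\rank (retractX_mx A) < K)%N, (retractX_vec A x)^T *m retractX_mx A = 0
    & row ord_max (retractX_mx A) = 0].
Proof.
move=> rkA xA d0.
have -> : retractX_mx A = P *m A.
  by rewrite /retractX_mx retractX_corner_eq0 // raddf0 row_mx0 mulmx0 addr0.
split; [exact: leq_ltn_trans (mxrankM_maxr _ _) rkA | | exact: row_last_pid].
have SP : S *m P = S.
  have le_mn : (m.+1 <= n)%N by rewrite ltnW.
  by rewrite mul_pid_mx (minn_idPl le_mn) (minn_idPr (leqW le_mn)).
have xP : x^T *m P = x^T - x ord_max 0 *: e^T.
  by rewrite {2}(pid_last_split_col x) linearD linearZ /= trmx_mul tr_pid_mx addrK.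
rewrite /retractX_vec linearD linearZ /= trmxK mulmxDl -scalemxAl !mulmxA xP -(mulmxA _ S) SP.
rewrite -row_last_coef // mulmxBl xA -scalemxAl trmx_delta -rowE.
by rewrite sub0r addNr.
Qed.

End XRetraction.

Section XMultiplicity.
Variables n m : nat.
Hypothesis hmn : (m.+2 < n.+1)%N.
Local Notation K := (1 + m.+1)%N.
Local Notation N := (dimAmb n K).

Lemma top_minor_generic (v : 'I_N -> C) :
  (\det (top_minor (generic_mx n K))).@[v] = \det (top_minor (Amat v)).
Proof.
by rewrite -map_generic_mx /top_minor -map_rsubmx -(map_pid_mx (meval v)) -map_mxM det_map_mx.
Qed.

Lemma X_witness : exists (A : 'M[C]_(n.+1, K)) x, inXX A x /\ \det (top_minor A) != 0.
Proof.
have le_mn : (m.+1 <= n.+1)%N by rewrite ltnW // ltnW.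
pose A : 'M[C]_(n.+1, K) := \matrix_(i, j) ((i : nat).+1 == j)%:R.
have rkA : (\rank A < K)%N.
  apply/mxrank_ltP; exists (delta_mx 0 0).
    by apply/eqP=> /matrixP/(_ 0 0)/eqP; rewrite !mxE oner_eq0.
  by rewrite -colE; apply/matrixP=> i j; rewrite !mxE.
exists A, 0; split; [split; split=> // | ].
- by rewrite trmx0 mul0mx.
- apply/rowP=> j; rewrite !mxE; case: eqP => // nj.
  by have := ltn_ord j; rewrite -nj => /(ltn_trans hmn); rewrite ltnn.
rewrite /top_minor (@pid_mxErow _ _ _ le_mn) mul_rowsub_mx mul1mx.
suff -> : rowsub (widen_ord le_mn) (rsubmx A) = 1%:M by rewrite det1 oner_eq0.
by apply/matrixP=> i j; rewrite !mxE.
Qed.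

Lemma multiplicity_one_X :
  intersection_multiplicity_one (ptset (@inW n K)) (ptset (@inEE n K)) (ptset (@inXX n K)).
Proof.
set d := \det (top_minor (generic_mx n K)).
have reg_A := entrywise_Amat d; have reg_x := entrywise_xvec d.
have reg_inv : regular d (fun v => (\det (top_minor (Amat v)))^-1).
  by apply: regular_ext (regular_inv d) _ => v; rewrite top_minor_generic.
have reg_top : entrywise (regular_funring d) (fun v => top_minor (Amat v)).
  exact: entrywise_mul (entrywise_cst _ _) (entrywise_rsubmx reg_A).
have reg_coef : entrywise (regular_funring d) (fun v => lastrow_coef (Amat v)).
  apply: entrywise_scale reg_inv _.
  exact: entrywise_mul (entrywise_row _ (entrywise_rsubmx reg_A)) (entrywise_adj reg_top).
apply: (multiplicity_one_ptset (d := d) (delta := fun A => \det (top_minor A))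
  (phiA := fun A _ => retractX_mx A) (phix := @retractX_vec _ n m)).
- exact: irreducible_X.
- by move=> A x ZAx; apply/inW_inEE_split; left.
- exact: top_minor_generic.
- exact: X_witness.
- apply: entrywise_add (entrywise_mul (entrywise_cst _ _) reg_A) _.
  apply: entrywise_mul (entrywise_cst _ _) (entrywise_row_mx _ (entrywise_cst _ _)).
  apply: entrywise_scalar_mx; apply: funring_add (reg_A ord_max 0) (funring_opp _).
  exact: entrywise_mul (entrywise_mul reg_coef (entrywise_cst _ _)) (entrywise_lsubmx reg_A) 0 0.
- apply: entrywise_add reg_x (entrywise_scale (reg_x ord_max 0) _).
  exact: entrywise_tr (entrywise_mul reg_coef (entrywise_cst _ _)).
- by move=> A x /inEE_rsubmx A0 _; apply: retractX_id.
- move=> A x [rkA xA] d0; have [rkA' xA' A0'] := retractX_in hmn rkA xA d0.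
  by split; split.
Qed.

End XMultiplicity.

(** * The component Y *)

Lemma mxrank_row_mx_lt (F : fieldType) p q r (B : 'M[F]_(p, q)) (L : 'M[F]_(p, r)) :
  (\rank L < r)%N -> (\rank (row_mx B L) < q + r)%N.
Proof.
case/mxrank_ltP=> w w0 Lw; apply/mxrank_ltP; exists (col_mx 0 w).
  by rewrite col_mx_eq0 negb_and w0 orbT.
by rewrite mul_row_col mulmx0 add0r Lw.
Qed.

Section YComponent.
Variables n m : nat.
Hypothesis hmn : (m.+2 < n.+1)%N.
Local Notation K := (1 + m.+1)%N.
Local Notation P := (pid_mx n : 'M[C]_(n.+1)).
Local Notation e := (delta_mx ord_max 0 : 'cV[C]_(n.+1)).

Lemma inYY_param (w : 'cV[C]_(n.+1)) (z : 'cV[C]_(m.+1)) U u c yn c2 :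
  let y := c *: (P *m w) + yn *: e in
  inYY (row_mx (lann y u) (P *m biann (P *m w) z U) : 'M_(n.+1, K)) (c2 *: y).
Proof.
move=> y; rewrite /inYY /inYmat lastcolsE row_mxKr.
have rkL : (\rank (P *m biann (P *m w) z U) < m.+1)%N.
  exact: leq_ltn_trans (mxrankM_maxr _ _) (mxrank_biann _ _ _ _).
split; split=> //; last exact: row_last_pid.
  exact: mxrank_row_mx_lt.
rewrite linearZ /= -scalemxAl mul_mx_row mulmx_lann /y linearD !linearZ /= mulmxDl.
rewrite -!scalemxAl !mulmxA tr_pid_mulmx_pid tr_delta_last_pid mul0mx mulmx_biann.
by rewrite !scaler0 addr0 row_mx0 scaler0.
Qed.

Lemma inYY_onto (A : 'M[C]_(n.+1, K)) (x : 'cV[C]_(n.+1)) :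
  inYY A x -> exists w z U u c yn c2, let y := c *: (P *m w) + yn *: e in
    A = row_mx (lann y u) (P *m biann (P *m w) z U) /\ x = c2 *: y.
Proof.
rewrite /inYY /inYmat lastcolsE => -[[_ xA] [rkL L0]].
have xg : x^T *m lsubmx A = 0 by rewrite mulmx_lsub xA; apply/matrixP=> i j; rewrite !mxE.
have xL : x^T *m rsubmx A = 0 by rewrite mulmx_rsub xA; apply/matrixP=> i j; rewrite !mxE.
have le_mn : (m.+1 <= n)%N by rewrite ltnW.
have [y [c2 [y0 yg yL ->]]] : exists y c2,
    [/\ y != 0, y^T *m lsubmx A = 0, y^T *m rsubmx A = 0 & x = c2 *: y].
  have [x0|x0] := eqVneq x 0; last by exists x, 1; rewrite scale1r.
  have [|y y0 [yL yg]] := left_kernel_common (A := rsubmx A) (B := lsubmx A).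
    apply: leq_ltn_trans (leq_add (_ : \rank (rsubmx A) <= m)%N (rank_leq_col _)) _ => //.
    by rewrite addn1 ltnS.
  by exists y, 0; rewrite x0 scale0r.
have [w [c [Pw0 PwL yE]]] := left_kernel_last_decomp L0 (leq_trans rkL le_mn) yL.
have [z z0 Lz] := mxrank_ltP _ rkL.
have [U LU] := biann_onto Pw0 z0 PwL Lz.
have [u gu] := lann_onto y0 yg.
exists w, z, U, u, c, (y ord_max 0), c2; rewrite -yE -gu -LU (pid_last_id L0).
by rewrite hsubmxK.
Qed.

(* Coordinates of the parameters w, z, U, u, c, y_n and c2 of [inYY_param]. *)
Local Notation TY := ('I_n.+1 + 'I_m.+1 + ('I_n.+1 * 'I_m.+1 * 'I_n.+1 * 'I_m.+1)
  + ('I_n.+1 * 'I_n.+1) + unit + unit + unit)%type.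

Definition paramY_vec (t : TY -> C) : 'cV[C]_(n.+1) :=
  t (inl (inl (inr tt))) *: (P *m \col_i t (inl (inl (inl (inl (inl (inl i)))))))
  + t (inl (inr tt)) *: e.

Definition paramY_mx (t : TY -> C) : 'M[C]_(n.+1, K) :=
  row_mx (lann (paramY_vec t) (fun j => \col_r t (inl (inl (inl (inr (j, r)))))))
    (P *m biann (P *m \col_i t (inl (inl (inl (inl (inl (inl i)))))))
       (\col_l t (inl (inl (inl (inl (inl (inr l)))))))
       (fun j l => \matrix_(r, s) t (inl (inl (inl (inl (inr (j, l, r, s)))))))).

Lemma irreducible_Y : irreducible_set (ptset (@inYY n K)).
Proof.
have poly_Pw : entrywise (polyfun_funring C TY)
    (fun t => P *m \col_i t (inl (inl (inl (inl (inl (inl i))))))).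
  exact: entrywise_mul (entrywise_cst _ _) (polyfun_coord_col _).
have poly_y : entrywise (polyfun_funring C TY) paramY_vec.
  apply: entrywise_add; apply: entrywise_scale (polyfun_coord _) _ => //.
  exact: entrywise_cst.
apply: (@irreducible_ptset _ _ _ _ paramY_mx (fun t => t (inr tt) *: paramY_vec t)).
- apply: entrywise_row_mx; first by apply: entrywise_lann => // j; apply: polyfun_coord_col.
  apply: entrywise_mul (entrywise_cst _ _) (entrywise_biann poly_Pw (polyfun_coord_col _) _).
  by move=> j l; apply: polyfun_coord_mx.
- exact: entrywise_scale (polyfun_coord _) poly_y.
- by move=> t; apply: inYY_param.
move=> A x /inYY_onto [w [z [U [u [c [yn [c2 [-> ->]]]]]]]].
exists (fun tau => match tau with
  | inl (inl (inl (inl (inl (inl i))))) => w i 0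
  | inl (inl (inl (inl (inl (inr l))))) => z l 0
  | inl (inl (inl (inl (inr (j, l, r, s))))) => U j l r s
  | inl (inl (inl (inr (j, r)))) => u j r 0
  | inl (inl (inr _)) => c
  | inl (inr _) => yn
  | inr _ => c2 end).
rewrite /paramY_mx /paramY_vec /= [\col_i w i 0]col_eta [\col_i z i 0]col_eta.
by rewrite (eq_lann _ (fun j => col_eta (u j))) (eq_biann _ _ (fun j l => matrix_eta (U j l))).
Qed.

End YComponent.

Section YRetraction.
Variables (F : fieldType) (n m : nat).
Local Notation K := (1 + m.+1)%N.
Implicit Types (A : 'M[F]_(n.+1, K)) (x : 'cV[F]_(n.+1)).

Definition clear_last_row A : 'M[F]_K :=
  block_mx 1%:M (- (A ord_max 0)^-1 *: row ord_max (rsubmx A)) 0 1%:M.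

Lemma clear_last_row_id A : row ord_max (rsubmx A) = 0 -> A *m clear_last_row A = A.
Proof. by move=> A0; rewrite /clear_last_row A0 scaler0 -scalar_mx_block mulmx1. Qed.

Lemma mul_clear_last_row A : A *m clear_last_row A =
  row_mx (lsubmx A) (rsubmx A - (A ord_max 0)^-1 *: (lsubmx A *m row ord_max (rsubmx A))).
Proof.
rewrite -{1}[A]hsubmxK mul_row_block !mulmx1 mulmx0 addr0.
by rewrite -scalemxAr scaleNr addrC.
Qed.

Lemma clear_last_row_in A x : (\rank A < K)%N -> x^T *m A = 0 -> A ord_max 0 != 0 ->
  let B := A *m clear_last_row A in
  [/\ (\rank B < K)%N, x^T *m B = 0, (\rank (rsubmx B) < m.+1)%N & row ord_max (rsubmx B) = 0].
Proof.
move=> rkA xA a0 B; have l0 : lshift m.+1 (0 : 'I_1) = 0 by apply: val_inj.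
have rkB : (\rank B < K)%N by apply: leq_ltn_trans (mxrankM_maxl _ _) rkA.
have B0 : row ord_max (rsubmx B) = 0.
  rewrite /B mul_clear_last_row row_mxKr; apply/rowP=> j.
  by rewrite !mxE big_ord1 !mxE l0 mulrA mulVf // mul1r subrr.
have Ba : B ord_max 0 = A ord_max 0.
  by rewrite /B mul_clear_last_row -[X in _ ord_max X]l0 row_mxEl mxE l0.
split=> //; first by rewrite /B mulmxA xA mul0mx.
by apply: mxrank_rsubmx_lt => //; rewrite Ba.
Qed.

End YRetraction.

Section YMultiplicity.
Variables n m : nat.
Hypothesis hmn : (m.+2 < n.+1)%N.
Local Notation K := (1 + m.+1)%N.

Lemma Y_witness : exists (A : 'M[C]_(n.+1, K)) x, inYY A x /\ A ord_max 0 != 0.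
Proof.
exists (delta_mx ord_max 0), 0; split; last by rewrite mxE !eqxx oner_eq0.
have L0 : lastcols (delta_mx ord_max 0 : 'M[C]_(n.+1, K)) = 0.
  by apply/matrixP=> i j; rewrite !mxE andbF.
split; split; rewrite ?L0 ?mxrank0 ?mxrank_delta ?row0 ?trmx0 ?mul0mx //.
Qed.

Lemma multiplicity_one_Y :
  intersection_multiplicity_one (ptset (@inW n K)) (ptset (@inEE n K)) (ptset (@inYY n K)).
Proof.
set d := generic_mx n K ord_max 0.
have dE v : d.@[v] = Amat v ord_max 0 by rewrite -map_generic_mx mxE.
have reg_A := entrywise_Amat d.
have reg_T : entrywise (regular_funring d) (fun v => clear_last_row (Amat v)).
  apply: entrywise_col_mx; apply: entrywise_row_mx; try exact: entrywise_cst.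
  apply: entrywise_scale (entrywise_row _ (entrywise_rsubmx reg_A)).
  by apply: funring_opp; apply: regular_ext (regular_inv d) _ => v; rewrite dE.
apply: (multiplicity_one_ptset (d := d) (delta := fun A => A ord_max 0)
  (phiA := fun A _ => A *m clear_last_row A) (phix := fun _ x => x)).
- exact: irreducible_Y.
- by move=> A x ZAx; apply/inW_inEE_split; right.
- exact: dE.
- exact: Y_witness.
- exact: entrywise_mul reg_A reg_T.
- exact: entrywise_xvec.
- by move=> A x /inEE_rsubmx A0 _; rewrite clear_last_row_id.
- move=> A x [rkA xA] a0; have [rkB xB rkL L0] := clear_last_row_in rkA xA a0.
  by rewrite /inYY /inYmat lastcolsE.
Qed.

End YMultiplicity.

Theorem proposition7 (n k : nat) (hk1 : (1 < k)%N) (hkn : (k < n.+1)%N) :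
  (forall (A : 'M[C]_(n.+1, k)) (x : 'cV[C]_(n.+1)),
      inW A x /\ inEE A x <-> inXX A x \/ inYY A x) /\
  intersection_multiplicity_one (ptset (@inW n k)) (ptset (@inEE n k))
    (ptset (@inXX n k)) /\
  intersection_multiplicity_one (ptset (@inW n k)) (ptset (@inEE n k))
    (ptset (@inYY n k)).
Proof.
case: k hk1 hkn => [|[|m]] // _ hmn.
split; first exact: inW_inEE_split.
by split; [exact: multiplicity_one_X | exact: multiplicity_one_Y].
Qed.
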